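(* For all sr-expressions $e \in \mathcal{T}$, we have $L_\Sigma(e) = \llbracket e\rrbracket$.
   Context: Fix a finite alphabet $\Sigma$. The set $\mathcal{T}$ of series-rational expressions (sr-expressions) is generated by $e, f ::= 0 \mid 1 \mid \mathtt{a}\in\Sigma \mid e+f \mid e\cdot f \mid e\parallel f \mid e^*$. Their semantics $\llbracket -\rrbracket$ maps each expression to a set of series-parallel pomsets: $\llbracket 0\rrbracket=\emptyset$, $\llbracket 1\rrbracket=\{1\}$ (the empty pomset), $\llbracket \mathtt{a}\rrbracket=\{\mathtt{a}\}$, and $+,\cdot,\parallel,{}^*$ are interpreted as union, pointwise sequential composition, pointwise parallel composition and Kleene closure of pomset languages. $\mathcal{F}\subseteq\mathcal{T}$ is the smallest set with $1\in\mathcal{F}$; $e+f\in\mathcal{F}$ if $e\in\mathcal{F}$ or $f\in\mathcal{F}$; $e\cdot f, e\parallel f\in\mathcal{F}$ if $e,f\in\mathcal{F}$; and $e^*\in\mathcal{F}$ for all $e$. A pomset automaton (PA) is a tuple $\langle Q,F,\delta,\gamma\rangle$ with states $Q$, accepting states $F\subseteq Q$, $\delta: Q\times\Sigma\to 2^Q$ and $\gamma: Q\times\mathbb{M}(Q)\to 2^Q$ (where $\mathbb{M}(Q)$ is the set of finite multisets over $Q$), such that for each $q$ only finitely many $\phi$ have $\gamma(q,\phi)\neq\emptyset$. Its run relation $\rightarrow$ is the smallest relation with: $q\xrightarrow{1} q$; $q\xrightarrow{\mathtt{a}} q'$ if $q'\in\delta(q,\mathtt{a})$; $q\xrightarrow{U\cdot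 V}q'$ if $q\xrightarrow{U}q''\xrightarrow{V}q'$; and $q\xrightarrow{U_1\parallel\cdots\parallel U_n}q'$ if $q'\in\gamma(q,\{\!\{q_1,\dots,q_n\}\!\})$ and $q_i\xrightarrow{U_i}q_i'\in F$ for all $i$. The language of $q$ is $\{U : q\xrightarrow{U} q'\in F\}$. For $e\in\mathcal{T}$ and $T\subseteq\mathcal{T}$, let $e\star T = T$ if $e\in\mathcal{F}$ and $\emptyset$ otherwise, and let $T ; e$ denote the set $\{f\cdot e : f\in T\}$. The derivatives $\delta_\Sigma:\mathcal{T}\times\Sigma\to 2^{\mathcal{T}}$ and $\gamma_\Sigma:\mathcal{T}\times\mathbb{M}(\mathcal{T})\to 2^{\mathcal{T}}$ are defined by: $\delta_\Sigma(0,\mathtt a)=\delta_\Sigma(1,\mathtt a)=\emptyset$; $\delta_\Sigma(\mathtt b,\mathtt a)=\{1 : \mathtt a=\mathtt b\}$; $\delta_\Sigma(e+f,\mathtt a)=\delta_\Sigma(e,\mathtt a)\cup\delta_\Sigma(f,\mathtt a)$; $\delta_\Sigma(e\cdot f,\mathtt a)=\{g\cdot f : g\in\delta_\Sigma(e,\mathtt a)\}\cup e\star\delta_\Sigma(f,\mathtt a)$; $\delta_\Sigma(e\parallel f,\mathtt a)=\emptyset$; $\delta_\Sigma(e^*,\mathtt a)=\{g\cdot e^* : g\in\delta_\Sigma(e,\mathtt a)\}$; and $\gamma_\Sigma(0,\phi)=\gamma_\Sigma(1,\phi)=\gamma_\Sigma(\mathtt b,\phi)=\emptyset$; $\gamma_\Sigma(e+f,\phi)=\gamma_\Sigma(e,\phi)\cup\gamma_\Sigma(f,\phi)$;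 $\gamma_\Sigma(e\cdot f,\phi)=\{g\cdot f: g\in\gamma_\Sigma(e,\phi)\}\cup e\star\gamma_\Sigma(f,\phi)$; $\gamma_\Sigma(e\parallel f,\phi)=\{1 : \phi=\{\!\{e,f\}\!\}\}$; $\gamma_\Sigma(e^*,\phi)=\{g\cdot e^* : g\in\gamma_\Sigma(e,\phi)\}$. The syntactic PA is $A_\Sigma=\langle\mathcal{T},\mathcal{F},\delta_\Sigma,\gamma_\Sigma\rangle$, and $L_\Sigma(e)$ denotes the language of state $e$ in $A_\Sigma$. *)

From Stdlib Require Import List Permutation.
From mathcomp Require Import all_boot.

Set Implicit Arguments.
Unset Strict Implicit.
Unset Printing Implicit Defensive.

Section SR.

Variable Sigma : finType.

(* Pomsets: finite labelled posets; equality of pomsets is isomorphism *)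

Record pomset := Pomset {
  pcar : finType;
  plab : pcar -> Sigma;
  ple  : rel pcar;
  ple_refl  : reflexive ple;
  ple_anti  : antisymmetric ple;
  ple_trans : transitive ple }.
Arguments plab p _ : clear implicits.
Arguments ple p _ _ : clear implicits.

Definition pom_iso (U V : pomset) : Prop :=
  exists f : pcar U -> pcar V,
    bijective f /\ (forall x, plab V (f x) = plab U x) /\
    (forall x y, ple V (f x) (f y) = ple U x y).

Definition one_le : rel void := fun _ _ => true.
Lemma one_refl : reflexive one_le. Proof. by []. Qed.
Lemma one_anti : antisymmetric one_le. Proof. by case. Qed.
Lemma one_trans : transitive one_le. Proof. by []. Qed.
Definition pom_one : pomset :=
  @Pomset void (fun x => match x with end) one_le one_refl one_anti one_trans.

Definition atom_le : rel unit := fun _ _ => true.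
Lemma atom_refl : reflexive atom_le. Proof. by []. Qed.
Lemma atom_anti : antisymmetric atom_le. Proof. by move=> [] []. Qed.
Lemma atom_trans : transitive atom_le. Proof. by []. Qed.
Definition pom_atom (a : Sigma) : pomset :=
  @Pomset unit (fun _ => a) atom_le atom_refl atom_anti atom_trans.

Definition comp_le (b : bool) (U V : pomset) : rel (pcar U + pcar V)%type :=
  fun x y => match x, y with
  | inl x, inl y => ple U x y
  | inr x, inr y => ple V x y
  | inl _, inr _ => b
  | inr _, inl _ => false
  end.
Arguments comp_le b U V : clear implicits.

Lemma comp_refl b U V : reflexive (comp_le b U V).
Proof. by case=> x /=; apply: ple_refl. Qed.
Lemma comp_anti b U V : antisymmetric (comp_le b U V).
Proof.
case=> x [] y /= h; try by move: h; rewrite /= ?andbF ?andFb.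
all: first [by congr inl; apply: (ple_anti h) | by congr inr; apply: (ple_anti h)].
Qed.
Lemma comp_trans b U V : transitive (comp_le b U V).
Proof.
case=> y [] x [] z //= h1 h2; try by [apply: ple_trans h1 h2]; by [].
Qed.

Definition comp_lab (U V : pomset) (x : (pcar U + pcar V)%type) : Sigma :=
  match x with inl x => plab U x | inr x => plab V x end.
Arguments comp_lab U V : clear implicits.

Definition pom_seq (U V : pomset) : pomset :=
  @Pomset (pcar U + pcar V)%type (@comp_lab U V) (comp_le true U V)
    (@comp_refl true U V) (@comp_anti true U V) (@comp_trans true U V).

Definition pom_par (U V : pomset) : pomset :=
  @Pomset (pcar U + pcar V)%type (@comp_lab U V) (comp_le false U V)
    (@comp_refl false U V) (@comp_anti false U V) (@comp_trans false U V).

Definition pom_parn (Us : list pomset) : pomset := foldr pom_par pom_one Us.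

Definition lang := pomset -> Prop.

Inductive term : Type :=
| Zero : term
| One : term
| Sym : Sigma -> term
| Plus : term -> term -> term
| Seq : term -> term -> term
| Par : term -> term -> term
| Star : term -> term.

Inductive star_lang (L : lang) : lang :=
| star_nil U : pom_iso U pom_one -> star_lang L U
| star_cons U V W : L V -> star_lang L W -> pom_iso U (pom_seq V W) ->
    star_lang L U.

(* [[e]]; languages are closed under isomorphism (pomsets = iso classes) *)
Fixpoint sem (e : term) : lang :=
  match e with
  | Zero => fun _ => False
  | One => fun U => pom_iso U pom_one
  | Sym a => fun U => pom_iso U (pom_atom a)
  | Plus e f => fun U => sem e U \/ sem f U
  | Seq e f => fun U => exists V W, sem e V /\ sem f W /\ pom_iso U (pom_seq V W)
  | Par e f => fun U => exists V W, sem e V /\ sem f W /\ pom_iso U (pom_par V W)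
  | Star e => star_lang (sem e)
  end.

(* A finite multiset over Q is represented by a list, up to permutation;
   gamma is required to be invariant under permutation of its multiset
   argument, and for every state only finitely many multisets (up to
   permutation) have a nonempty gamma. *)
Record PA := MkPA {
  pa_Q : Type;
  pa_F : pa_Q -> Prop;
  pa_delta : pa_Q -> Sigma -> pa_Q -> Prop;
  pa_gamma : pa_Q -> list pa_Q -> pa_Q -> Prop;
  pa_gamma_perm : forall q phi phi' q',
      Permutation phi phi' -> pa_gamma q phi q' -> pa_gamma q phi' q';
  pa_gamma_fin : forall q, exists Phi : list (list pa_Q),
      forall phi q', pa_gamma q phi q' -> exists2 phi', In phi' Phi & Permutation phi phi' }.

Section Runs.
Variable A : PA.

Inductive run : pa_Q A -> pomset -> pa_Q A -> Prop :=
| run_one q : run q pom_one q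
| run_atom q a q' : pa_delta q a q' -> run q (pom_atom a) q'
| run_seq q q'' q' U V : run q U q'' -> run q'' V q' -> run q (pom_seq U V) q'
| run_par q q' (l : list (pa_Q A * pomset * pa_Q A)) :
    pa_gamma q (map (fun t => t.1.1) l) q' ->
    (forall t, In t l -> run t.1.1 t.1.2 t.2 /\ pa_F t.2) ->
    run q (pom_parn (map (fun t => t.1.2) l)) q'.

Definition pa_lang (q : pa_Q A) : lang :=
  fun U => exists2 U', pom_iso U U' & exists2 q', run q U' q' & pa_F q'.

End Runs.

Fixpoint inF (e : term) : Prop :=
  match e with
  | Zero => False
  | One => True
  | Sym _ => False
  | Plus e f => inF e \/ inF f
  | Seq e f => inF e /\ inF f
  | Par e f => inF e /\ inF f
  | Star _ => True
  end.

Fixpoint deltaS (e : term) (a : Sigma) : term -> Prop :=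
  match e with
  | Zero | One => fun _ => False
  | Sym b => fun g => a = b /\ g = One
  | Plus e f => fun g => deltaS e a g \/ deltaS f a g
  | Seq e f => fun g => (exists2 h, deltaS e a h & g = Seq h f) \/
                        (inF e /\ deltaS f a g)
  | Par _ _ => fun _ => False
  | Star e => fun g => exists2 h, deltaS e a h & g = Seq h (Star e)
  end.

Fixpoint gammaS (e : term) (phi : list term) : term -> Prop :=
  match e with
  | Zero | One | Sym _ => fun _ => False
  | Plus e f => fun g => gammaS e phi g \/ gammaS f phi g
  | Seq e f => fun g => (exists2 h, gammaS e phi h & g = Seq h f) \/
                        (inF e /\ gammaS f phi g)
  | Par e f => fun g => g = One /\ Permutation phi (e :: f :: nil)
  | Star e => fun g => exists2 h, gammaS e phi h & g = Seq h (Star e)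
  end.

Lemma gammaS_perm e phi phi' g :
  Permutation phi phi' -> gammaS e phi g -> gammaS e phi' g.
Proof.
move=> P; elim: e g => //=.
- by move=> e IHe f IHf g [/IHe|/IHf]; auto.
- move=> e IHe f IHf g [[h /IHe Hh ->]|[Fe /IHf]]; [left; exists h | right]; auto.
- move=> e _ f _ g [-> P']; split=> //.
  by apply: Permutation_trans P'; apply: Permutation_sym.
- by move=> e IHe g [h /IHe Hh ->]; exists h.
Qed.

Lemma gammaS_fin e : exists Phi : list (list term),
  forall phi g, gammaS e phi g -> exists2 phi', In phi' Phi & Permutation phi phi'.
Proof.
elim: e => /=.
- by exists nil.
- by exists nil.
- by move=> _; exists nil.
- move=> e [P1 H1] f [P2 H2]; exists (P1 ++ P2) => phi g [/H1|/H2] [p' I Pp];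
  by exists p' => //; apply/in_or_app; auto.
- move=> e [P1 H1] f [P2 H2]; exists (P1 ++ P2) => phi g [[h /H1 [p' I Pp] _]|[_ /H2 [p' I Pp]]];
  by exists p' => //; apply/in_or_app; auto.
- move=> e _ f _; exists ((e :: f :: nil) :: nil) => phi g [_ Pp].
  by exists (e :: f :: nil) => //; left.
- by move=> e [P1 H1]; exists P1 => phi g [h /H1 ? _].
Qed.

Definition A_Sigma : PA :=
  @MkPA term inF deltaS gammaS gammaS_perm gammaS_fin.

Definition L_Sigma (e : term) : lang := @pa_lang A_Sigma e.

End SR.

Arguments Zero {Sigma}.
Arguments One {Sigma}.

(** Soundness: by induction on runs, a run from [e] to [e'] on [U] followed by
    any pomset of [[e']] yields a pomset of [[e]]; each derivative step
    [e -a-> g] or [e -phi-> g] "peels off" the prefix [a] (resp. the parallel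
    pomset read from [phi]), because every derivative has the shape
    [h . f] or [h . e*] with [h] a derivative of a subterm.
    Completeness: by induction on [e].  The only subtle point is that a state
    [g] whose transitions include those of [e] (and which is accepting when
    [e] is) accepts everything [e] accepts; this gives the cases [e + f],
    [e . f] (once [e] has reached an accepting [e'], the state [e' . f] can
    move like [f]) and [e*] (the state [e . e*] can only move like [e*]). *)

From Stdlib Require Import List Permutation.
From mathcomp Require Import all_boot.

Set Implicit Arguments.
Unset Strict Implicit.
Unset Printing Implicit Defensive.

Lemma Forall2_map_In (A B C : Type) (R : B -> C -> Prop) (f : A -> B) (g : A -> C)
    (l : list A) :
  (forall x, In x l -> R (f x) (g x)) -> Forall2 R (map f l) (map g l).
Proof.
elim: l => [|x l IHl] /= Hl; constructor; first by apply: Hl; left.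
by apply: IHl => y Hy; apply: Hl; right.
Qed.

Section PomsetIso.

Variable Sigma : finType.
Local Notation pom := (pomset Sigma).
Local Notation one := (pom_one Sigma).

Lemma pom_isoP (U V : pom) (f : pcar U -> pcar V) (g : pcar V -> pcar U) :
  cancel f g -> cancel g f -> (forall x, @plab _ V (f x) = @plab _ U x) ->
  (forall x y, @ple _ V (f x) (f y) = @ple _ U x y) -> pom_iso U V.
Proof. by move=> fK gK flab fle; exists f; split; [exists g | split]. Qed.

Lemma pom_iso_refl (U : pom) : pom_iso U U.
Proof. exact: (@pom_isoP U U id id). Qed.

Lemma pom_iso_sym (U V : pom) : pom_iso U V -> pom_iso V U.
Proof.
move=> [f [[g fK gK] [flab fle]]]; apply: (pom_isoP gK fK) => [x|x y].
  by rewrite -[in RHS](gK x) flab.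
by rewrite -[in RHS](gK x) -[in RHS](gK y) fle.
Qed.

Lemma pom_iso_trans (U V W : pom) : pom_iso U V -> pom_iso V W -> pom_iso U W.
Proof.
move=> [f [[g fK gK] [flab fle]]] [f' [[g' fK' gK'] [flab' fle']]].
apply: (@pom_isoP U W (f' \o f) (g \o g')) => [x|x|x|x y] /=.
- by rewrite fK' fK.
- by rewrite gK gK'.
- by rewrite flab' flab.
- by rewrite fle' fle.
Qed.

(* [pom_seq] and [pom_par] are [pom_comp true] and [pom_comp false] up to
   conversion, so that their common properties are proved once. *)
Definition pom_comp (b : bool) (U V : pom) : pom :=
  Pomset (@comp_lab _ U V) (@comp_refl _ b U V) (@comp_anti _ b U V)
    (@comp_trans _ b U V).

Definition sum_map (A B C D : Type) (f : A -> C) (g : B -> D) (x : A + B) : C + D :=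
  match x with inl a => inl (f a) | inr b => inr (g b) end.

Lemma pom_iso_comp b (U U' V V' : pom) : pom_iso U U' -> pom_iso V V' ->
  pom_iso (pom_comp b U V) (pom_comp b U' V').
Proof.
move=> [f [[g fK gK] [flab fle]]] [f' [[g' fK' gK'] [flab' fle']]].
apply: (@pom_isoP (pom_comp b U V) (pom_comp b U' V') (sum_map f f') (sum_map g g')).
- by case=> x /=; rewrite ?fK ?fK'.
- by case=> x /=; rewrite ?gK ?gK'.
- by case=> x /=; rewrite ?flab ?flab'.
- by case=> x [] y /=; rewrite ?fle ?fle'.
Qed.

Lemma pom_iso_seq (U U' V V' : pom) : pom_iso U U' -> pom_iso V V' ->
  pom_iso (pom_seq U V) (pom_seq U' V').
Proof. exact: (pom_iso_comp true). Qed.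

Lemma pom_iso_par (U U' V V' : pom) : pom_iso U U' -> pom_iso V V' ->
  pom_iso (pom_par U V) (pom_par U' V').
Proof. exact: (pom_iso_comp false). Qed.

Lemma pom_comp_one b (U : pom) : pom_iso (pom_comp b U one) U.
Proof.
apply: (@pom_isoP (pom_comp b U one) U
  (fun x : pcar U + void => match x with inl u => u | inr v => match v with end end)
  inl) => [[|[]]|//|[|[]]|[x|[]] [y|[]]] //.
Qed.

Lemma pom_seq_one (U : pom) : pom_iso (pom_seq U one) U.
Proof. exact: (pom_comp_one true). Qed.

Lemma pom_par_one (U : pom) : pom_iso (pom_par U one) U.
Proof. exact: (pom_comp_one false). Qed.

Lemma pom_one_seq (U : pom) : pom_iso (pom_seq one U) U.
Proof.
apply: (@pom_isoP (pom_seq one U) U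
  (fun x : void + pcar U => match x with inl v => match v with end | inr u => u end)
  inr) => [[[]|]|//|[[]|]|[[]|x] [[]|y]] //.
Qed.

Lemma pom_par_comm (U V : pom) : pom_iso (pom_par U V) (pom_par V U).
Proof.
pose swap (A B : Type) (x : A + B) : B + A :=
  match x with inl a => inr a | inr b => inl b end.
by apply: (@pom_isoP (pom_par U V) (pom_par V U) (@swap _ _) (@swap _ _))
  => [[]|[]|[]|[] x [] y].
Qed.

Lemma pom_seq_assoc (U V W : pom) :
  pom_iso (pom_seq U (pom_seq V W)) (pom_seq (pom_seq U V) W).
Proof.
pose fwd (x : pcar U + (pcar V + pcar W)) : (pcar U + pcar V) + pcar W :=
  match x with inl u => inl (inl u) | inr (inl v) => inl (inr v) | inr (inr w) => inr w end.
pose bwd (x : (pcar U + pcar V) + pcar W) : pcar U + (pcar V + pcar W) :=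
  match x with inl (inl u) => inl u | inl (inr v) => inr (inl v) | inr w => inr (inr w) end.
by apply: (@pom_isoP (pom_seq U (pom_seq V W)) (pom_seq (pom_seq U V) W) fwd bwd)
  => [[|[]]|[[]|]|[|[]]|[x|[x|x]] [y|[y|y]]].
Qed.

End PomsetIso.

Section RunInduction.

Variables (Sigma : finType) (A : PA Sigma).

(* The generated induction principle of [run] gives no hypothesis for the
   runs of the parallel components, which are hidden behind a list. *)
Lemma run_nested_ind (P : pa_Q A -> pomset Sigma -> pa_Q A -> Prop) :
  (forall q, P q (pom_one Sigma) q) ->
  (forall q a q', pa_delta q a q' -> P q (pom_atom a) q') ->
  (forall q q'' q' U V, P q U q'' -> P q'' V q' -> P q (pom_seq U V) q') ->
  (forall q q' (l : list (pa_Q A * pomset Sigma * pa_Q A)),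
     pa_gamma q (map (fun t => t.1.1) l) q' ->
     (forall t, In t l -> pa_F t.2 /\ P t.1.1 t.1.2 t.2) ->
     P q (pom_parn (map (fun t => t.1.2) l)) q') ->
  forall q U q', run q U q' -> P q U q'.
Proof.
move=> Pone Patom Pseq Ppar; fix IH 4 => q U q' [{}q|{}q a {}q' d|
  {}q q'' {}q' U1 U2 r1 r2|{}q {}q' l g Hl].
- exact: Pone.
- exact: Patom.
- exact: Pseq (IH _ _ _ r1) (IH _ _ _ r2).
- apply: Ppar => // t /Hl [r Ft]; split; [exact: Ft | exact: IH _ _ _ r].
Qed.

End RunInduction.

Section Syntactic.

Variable Sigma : finType.
Local Notation pom := (pomset Sigma).
Local Notation one := (pom_one Sigma).
Local Notation term := (term Sigma).
Local Notation runS := (@run Sigma (A_Sigma Sigma)).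

Lemma sem_iso (e : term) (U V : pom) : pom_iso U V -> sem e V -> sem e U.
Proof.
elim: e U V => [|||e IHe f IHf|e _ f _|e _ f _|e _] U V UV //=.
- exact: pom_iso_trans.
- exact: pom_iso_trans.
- by case=> [/(IHe _ _ UV)|/(IHf _ _ UV)]; [left | right].
- by case=> V1 [V2 [S1 [S2 VV]]]; exists V1, V2; do 2!split=> //; exact: pom_iso_trans VV.
- by case=> V1 [V2 [S1 [S2 VV]]]; exists V1, V2; do 2!split=> //; exact: pom_iso_trans VV.
- by move=> SV; case: SV UV => [V0 V0one|V0 V1 V2 S1 S2 VV] UV;
    [apply: star_nil | apply: star_cons S1 S2 _]; apply: pom_iso_trans UV _.
Qed.

Lemma inF_sem_one (e : term) : inF e -> sem e one.
Proof.
elim: e => [||_|e IHe f IHf|e IHe f IHf|e IHe f IHf|e _] //=.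
- by move=> _; exact: pom_iso_refl.
- by case=> [/IHe|/IHf]; [left | right].
- move=> [/IHe Se /IHf Sf]; exists one, one; do 2!split=> //.
  exact/pom_iso_sym/pom_one_seq.
- move=> [/IHe Se /IHf Sf]; exists one, one; do 2!split=> //.
  exact/pom_iso_sym/pom_par_one.
- by move=> _; apply: star_nil; exact: pom_iso_refl.
Qed.

Definition seq_incl (X : pom) (g e : term) : Prop :=
  forall W, sem g W -> sem e (pom_seq X W).

Lemma seq_incl_seql (X : pom) (e h f : term) :
  seq_incl X h e -> seq_incl X (Seq h f) (Seq e f).
Proof.
move=> Xhe W [V1 [V2 [S1 [S2 WV]]]]; exists (pom_seq X V1), V2.
split; [exact: Xhe | split=> //].
apply: pom_iso_trans (pom_seq_assoc _ _ _).
by apply: pom_iso_seq WV; exact: pom_iso_refl.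
Qed.

Lemma seq_incl_seqr (X : pom) (e g f : term) :
  inF e -> seq_incl X g f -> seq_incl X g (Seq e f).
Proof.
move=> Fe Xgf W Sg; exists one, (pom_seq X W).
split; [exact: inF_sem_one | split; [exact: Xgf | exact/pom_iso_sym/pom_one_seq]].
Qed.

Lemma seq_incl_star (X : pom) (e h : term) :
  seq_incl X h e -> seq_incl X (Seq h (Star e)) (Star e).
Proof.
move=> Xhe W [V1 [V2 [S1 [S2 WV]]]].
apply: (star_cons (V := pom_seq X V1) (W := V2)) S2 _; first exact: Xhe.
apply: pom_iso_trans (pom_seq_assoc _ _ _).
by apply: pom_iso_seq WV; exact: pom_iso_refl.
Qed.

Lemma deltaS_seq_incl (e : term) a g : deltaS e a g -> seq_incl (pom_atom a) g e.
Proof.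
elim: e g => [||b|e IHe f IHf|e IHe f IHf|//|e IHe] g //=.
- move=> [-> ->] W Wone; apply: pom_iso_trans (pom_seq_one _).
  by apply: pom_iso_seq Wone; exact: pom_iso_refl.
- by case=> [/IHe|/IHf] Xg W /Xg; [left | right].
- case=> [[h /IHe Xhe ->]|[Fe /IHf]]; first exact: seq_incl_seql.
  exact: seq_incl_seqr.
- by case=> h /IHe Xhe ->; exact: seq_incl_star.
Qed.

Lemma gammaS_seq_incl (e : term) phi g (Xs : list pom) :
  gammaS e phi g -> Forall2 (@sem Sigma) phi Xs -> seq_incl (pom_parn Xs) g e.
Proof.
move=> + SXs; elim: e g => [|||e IHe f IHf|e IHe f IHf|e _ f _|e IHe] g //=.
- by case=> [/IHe|/IHf] Xg W /Xg; [left | right].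
- case=> [[h /IHe Xhe ->]|[Fe /IHf]]; first exact: seq_incl_seql.
  exact: seq_incl_seqr.
- move=> [-> phi_ef] W Wone.
  have XX X1 X2 : pom_iso (pom_seq (pom_parn [:: X1; X2]) W) (pom_par X1 X2).
    apply: pom_iso_trans (pom_iso_seq (pom_iso_refl _) Wone) _.
    exact: pom_iso_trans (pom_seq_one _) (pom_iso_par (pom_iso_refl _) (pom_par_one _)).
  case: (Permutation_length_2_inv (Permutation_sym phi_ef)) SXs => -> SXs;
    inversion_clear SXs as [|? X1 ? ? S1 SXs'];
    inversion_clear SXs' as [|? X2 ? ? S2 SXs'']; inversion_clear SXs''.
  + by exists X1, X2; do 2!split=> //; apply: XX.
  + by exists X2, X1; do 2!split=> //; exact: pom_iso_trans (XX _ _) (pom_par_comm _ _).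
- by case=> h /IHe Xhe ->; exact: seq_incl_star.
Qed.

Lemma run_seq_incl (q : term) U q' : runS q U q' -> seq_incl U q' q.
Proof.
elim/run_nested_ind => {q U q'} [q|q a q'|q q'' q' U V XU XV|q q' l g Hl] W SW.
- exact: sem_iso (pom_one_seq _) SW.
- by move/deltaS_seq_incl; apply.
- by apply: sem_iso (pom_iso_sym (pom_seq_assoc _ _ _)) _; apply/XU/XV.
- apply: gammaS_seq_incl g _ _ SW; apply: Forall2_map_In => t /Hl [Ft Xt].
  exact: sem_iso (pom_iso_sym (pom_seq_one _)) (Xt _ (inF_sem_one Ft)).
Qed.

Definition accepts (e : term) (U : pom) : Prop := exists2 e', runS e U e' & inF e'.

Lemma accepts_sem (e : term) U : accepts e U -> sem e U.
Proof.
move=> [e' r Fe']; apply: sem_iso (pom_iso_sym (pom_seq_one U)) _.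
exact: run_seq_incl r _ (inF_sem_one Fe').
Qed.

Definition steps_incl (e g : term) : Prop :=
  (forall a h, deltaS e a h -> deltaS g a h) /\
  (forall phi h, gammaS e phi h -> gammaS g phi h).

Lemma run_steps_incl (e g : term) U e' : steps_incl e g ->
  runS e U e' -> runS g U e' \/ e' = e /\ runS g U g.
Proof.
move=> [de_dg ge_gg] r.
suff : e = e -> runS g U e' \/ e' = e /\ runS g U g by apply.
elim: {1}e U e' / r => [q|q a q' d|q q'' q' U V _ IH1 r2 IH2|q q' l gm Hl] Eq.
- by right; split=> //; exact: run_one.
- by left; apply: run_atom; apply: de_dg; rewrite -Eq.
- case: (IH1 Eq) => [r1|[Eq'' r1]]; first by left; exact: run_seq r1 r2.
  case: (IH2 Eq'') => [r2'|[Eq' r2']]; first by left; exact: run_seq r1 r2'.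
  by right; split=> //; exact: run_seq r1 r2'.
- by left; apply: run_par Hl; apply: ge_gg; rewrite -Eq.
Qed.

Lemma accepts_steps_incl (e g : term) U : steps_incl e g -> (inF e -> inF g) ->
  accepts e U -> accepts g U.
Proof.
move=> eg Fg [e' r Fe']; case: (run_steps_incl eg r) => [r'|[Ee' r']].
  by exists e'.
by exists g => //; apply: Fg; rewrite -Ee'.
Qed.

Lemma run_seql (e f : term) U e' : runS e U e' -> runS (Seq e f) U (Seq e' f).
Proof.
elim=> {e U e'} [e|e a e' d|e e'' e' U V _ r1 _ r2|e e' l gm Hl].
- exact: run_one.
- by apply: run_atom; left; exists e'.
- exact: run_seq r1 r2.
- by apply: run_par Hl; left; exists e'.
Qed.

Lemma accepts_seq (e f : term) V W :
  accepts e V -> accepts f W -> accepts (Seq e f) (pom_seq V W).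
Proof.
move=> [e' r Fe'] /(@accepts_steps_incl f (Seq e' f)) [||q r' Fq].
- by split=> /= *; right.
- by split.
by exists q => //; exact: run_seq (run_seql f r) r'.
Qed.

(* Only up to isomorphism: runs read pomsets built literally from [pom_one],
   [pom_atom], [pom_seq] and [pom_parn], while [[e]] is isomorphism-closed. *)
Lemma sem_accepts (e : term) U : sem e U -> exists2 U', pom_iso U U' & accepts e U'.
Proof.
elim: e U => [//|U|a U|e IHe f IHf U|e IHe f IHf U|e IHe f IHf U|e IHe U] /=.
- by exists one => //; exists One => //; exact: run_one.
- by exists (pom_atom a) => //; exists One => //; exact: run_atom.
- case=> [/IHe|/IHf] [U' UU' acc]; exists U' => //.
    by apply: accepts_steps_incl acc => [|/=]; [split=> /= *; left | left].
  by apply: accepts_steps_incl acc => [|/=]; [split=> /= *; right | right].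
- move=> [V [W [/IHe [V' VV' accV] [/IHf [W' WW' accW] UVW]]]].
  exists (pom_seq V' W'); first exact: pom_iso_trans UVW (pom_iso_seq VV' WW').
  exact: accepts_seq.
- move=> [V [W [/IHe [V' VV' [e' re Fe']] [/IHf [W' WW' [f' rf Ff']] UVW]]]].
  exists (pom_parn (map (fun t => t.1.2) [:: (e, V', e'); (f, W', f')])).
    apply: pom_iso_trans UVW (pom_iso_par VV' _) => /=.
    exact: pom_iso_trans WW' (pom_iso_sym (pom_par_one _)).
  by exists One => //; apply: run_par => [|t [<-|[<-|[]]]] //=.
- elim=> {U} [U Uone|U V W /IHe [V' VV' accV] _ [W' WW' accW] UVW].
    by exists one => //; exists (Star e) => //; exact: run_one.
  exists (pom_seq V' W'); first exact: pom_iso_trans UVW (pom_iso_seq VV' WW').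
  apply: (@accepts_steps_incl (Seq e (Star e))) => //; last exact: accepts_seq.
  by split=> /= ? ? [//|[_]].
Qed.

End Syntactic.

Theorem lemma7p13 (Sigma : finType) (e : term Sigma) :
  forall U : pomset Sigma, L_Sigma e U <-> sem e U.
Proof.
move=> U; split.
- by case=> U' UU' acc; exact: sem_iso UU' (accepts_sem acc).
- by case/sem_accepts=> U' UU' acc; exists U'.
Qed.
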